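(* (1) If $U[-1]\to A\overset{f}{\to}B\to U$ is a distinguished triangle in $\mathscr{C}$ with $U\in\mathcal{U}$, then $A\in\mathscr{C}^-$ implies $B\in\mathscr{C}^-$. (2) If $S[-1]\to A\overset{f}{\to}B\to S$ is a distinguished triangle in $\mathscr{C}$ with $S\in\mathcal{S}$, then $B\in\mathscr{C}^-$ implies $A\in\mathscr{C}^-$.
   Context: $\mathscr{C}$ is a triangulated category with shift $[1]$; subcategories are full, additive, closed under isomorphisms and direct summands. $\mathrm{Ext}^1(X,Y)=\mathscr{C}(X,Y[1])$. $\mathcal{M}\ast\mathcal{N}$ is the full subcategory of objects $C$ admitting a distinguished triangle $M\to C\to N\to M[1]$ with $M\in\mathcal{M}$, $N\in\mathcal{N}$. A cotorsion pair $(\mathcal{U},\mathcal{V})$: $\mathrm{Ext}^1(\mathcal{U},\mathcal{V})=0$ and $\mathscr{C}=\mathcal{U}\ast\mathcal{V}[1]$. Fix a twin cotorsion pair, i.e. cotorsion pairs $(\mathcal{S},\mathcal{T}),(\mathcal{U},\mathcal{V})$ with $\mathrm{Ext}^1(\mathcal{S},\mathcal{V})=0$. Put $\mathcal{W}=\mathcal{T}\cap\mathcal{U}$ and $\mathscr{C}^-=\mathcal{S}[-1]\ast\mathcal{W}$. *)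

From HB Require Import structures.
From mathcomp Require Import all_boot all_algebra.
Set Implicit Arguments.
Unset Strict Implicit.
Unset Printing Implicit Defensive.
Import GRing.Theory.
Local Open Scope ring_scope.

Record PreTri := {
  Obj : Type;
  Mor : Obj -> Obj -> zmodType;
  comp : forall X Y Z : Obj, Mor Y Z -> Mor X Y -> Mor X Z;
  idm : forall X : Obj, Mor X X;
  sh : Obj -> Obj;
  shm : forall X Y : Obj, Mor X Y -> Mor (sh X) (sh Y);
  shinv : Obj -> Obj;
  dist : forall X Y Z : Obj, Mor X Y -> Mor Y Z -> Mor Z (sh X) -> Prop
}.

Arguments Obj : clear implicits.
Arguments Mor : clear implicits.
Arguments comp {p X Y Z}.
Arguments idm {p}.
Arguments sh {p}.
Arguments shm {p X Y}.
Arguments shinv {p}.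
Arguments dist {p X Y Z}.

Section Defs.
Variable C : PreTri.
Local Notation Ob := (Obj C).
Local Notation "g \o f" := (comp g f).

Definition is_iso (X Y : Ob) (f : Mor C X Y) : Prop :=
  exists g : Mor C Y X, g \o f = idm X /\ f \o g = idm Y.

Definition isomorphic (X Y : Ob) : Prop := exists f : Mor C X Y, is_iso f.

Definition is_zero (Z : Ob) : Prop :=
  (forall X (f g : Mor C Z X), f = g) /\ (forall X (f g : Mor C X Z), f = g).

Definition is_biproduct (X Y P : Ob) : Prop :=
  exists (i1 : Mor C X P) (i2 : Mor C Y P) (p1 : Mor C P X) (p2 : Mor C P Y),
    [/\ p1 \o i1 = idm X, p2 \o i2 = idm Y, p1 \o i2 = 0, p2 \o i1 = 0
      & (i1 \o p1) + (i2 \o p2) = idm P].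

Definition category_axioms : Prop :=
  [/\ (forall X Y Z W (f : Mor C X Y) (g : Mor C Y Z) (h : Mor C Z W),
          h \o (g \o f) = (h \o g) \o f),
      (forall X Y (f : Mor C X Y), idm Y \o f = f),
      (forall X Y (f : Mor C X Y), f \o idm X = f),
      (forall X Y Z (f : Mor C X Y) (g g' : Mor C Y Z), (g + g') \o f = (g \o f) + (g' \o f))
    & (forall X Y Z (f f' : Mor C X Y) (g : Mor C Y Z), g \o (f + f') = (g \o f) + (g \o f'))].

Definition additive_axioms : Prop :=
  (exists Z, is_zero Z) /\ (forall X Y, exists P, is_biproduct X Y P).

(* [1] is an additive autoequivalence; shinv X is a chosen object X[-1]
   with X[-1][1] isomorphic to X. *)
Definition shift_axioms : Prop :=
  (forall X : Ob, shm (idm X) = idm (sh X)) /\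
  (forall X Y Z (f : Mor C X Y) (g : Mor C Y Z), shm (g \o f) = shm g \o shm f) /\
  (forall X Y (f f' : Mor C X Y), shm (f + f') = (shm f) + (shm f')) /\
  (forall X Y, injective (@shm C X Y)) /\
  (forall X Y (g : Mor C (sh X) (sh Y)), exists f, shm f = g) /\
  (forall X, isomorphic (sh (shinv X)) X).

Definition TR1 : Prop :=
  [/\
      (forall X Y Z X' Y' Z' (u : Mor C X Y) (v : Mor C Y Z) (w : Mor C Z (sh X))
              (u' : Mor C X' Y') (v' : Mor C Y' Z') (w' : Mor C Z' (sh X'))
              (a : Mor C X X') (b : Mor C Y Y') (c : Mor C Z Z'),
          is_iso a -> is_iso b -> is_iso c ->
          b \o u = u' \o a -> c \o v = v' \o b -> shm a \o w = w' \o c ->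
          dist u v w -> dist u' v' w'),
      (forall X Z, is_zero Z -> dist (idm X) (0 : Mor C X Z) (0 : Mor C Z (sh X)))
    & (forall X Y (u : Mor C X Y), exists Z (v : Mor C Y Z) (w : Mor C Z (sh X)), dist u v w)].

Definition TR2 : Prop :=
  forall X Y Z (u : Mor C X Y) (v : Mor C Y Z) (w : Mor C Z (sh X)),
    dist u v w <-> dist v w (- shm u).

Definition TR3 : Prop :=
  forall X Y Z X' Y' Z' (u : Mor C X Y) (v : Mor C Y Z) (w : Mor C Z (sh X))
         (u' : Mor C X' Y') (v' : Mor C Y' Z') (w' : Mor C Z' (sh X'))
         (a : Mor C X X') (b : Mor C Y Y'),
    dist u v w -> dist u' v' w' -> b \o u = u' \o a ->
    exists c : Mor C Z Z', c \o v = v' \o b /\ shm a \o w = w' \o c.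

Definition TR4 : Prop :=
  forall X Y Z Z' X' Y' (u : Mor C X Y) (v : Mor C Y Z)
         (j : Mor C Y Z') (k : Mor C Z' (sh X))
         (l : Mor C Z X') (i : Mor C X' (sh Y))
         (m : Mor C Z Y') (n : Mor C Y' (sh X)),
    dist u j k -> dist v l i -> dist (v \o u) m n ->
    exists (f : Mor C Z' Y') (g : Mor C Y' X'),
      [/\ dist f g (shm j \o i),
          f \o j = m \o v, n \o f = k, g \o m = l & i \o g = shm u \o n].

Definition triangulated : Prop :=
  category_axioms /\ additive_axioms /\ shift_axioms /\ TR1 /\ TR2 /\ TR3 /\ TR4.

Definition subcat (D : Ob -> Prop) : Prop :=
  [/\ (forall X Y, D X -> isomorphic X Y -> D Y),
      (forall Z, is_zero Z -> D Z),
      (forall X Y P, is_biproduct X Y P -> D X -> D Y -> D P)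
    & (forall X Y P, is_biproduct X Y P -> D P -> D X)].

Definition shift1 (D : Ob -> Prop) (X : Ob) : Prop :=
  exists V, D V /\ isomorphic X (sh V).
Definition shiftm1 (D : Ob -> Prop) (X : Ob) : Prop :=
  exists S, D S /\ isomorphic X (shinv S).

Definition star (M N : Ob -> Prop) (X : Ob) : Prop :=
  exists Mo No (a : Mor C Mo X) (b : Mor C X No) (c : Mor C No (sh Mo)),
    [/\ M Mo, N No & dist a b c].

Definition Ext1_vanish (M N : Ob -> Prop) : Prop :=
  forall X Y, M X -> N Y -> forall f : Mor C X (sh Y), f = 0.

Definition cotorsion_pair (U V : Ob -> Prop) : Prop :=
  [/\ subcat U, subcat V, Ext1_vanish U V & forall X, star U (shift1 V) X].

Definition twin_cotorsion_pair (S T U V : Ob -> Prop) : Prop :=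
  [/\ cotorsion_pair S T, cotorsion_pair U V & Ext1_vanish S V].

Definition heartW (T U : Ob -> Prop) (X : Ob) : Prop := T X /\ U X.

Definition Cminus (S T U : Ob -> Prop) : Ob -> Prop :=
  star (shiftm1 S) (heartW T U).

End Defs.

From Pilot Require Import Defs.
From mathcomp Require Import all_boot all_algebra.

(* Both parts are two applications of the octahedral axiom.  The left halves
   S and U of the two cotorsion pairs are closed under extensions, and by the
   octahedral axiom the cone of a composite g \o f is an extension of the cones
   of f and g.  For (2), with M -> B -> W -> M[1] exhibiting B in C^-, the cone
   of A -> B -> W is an extension of M[1] and S0, hence lies in S, so A is in
   S[-1] * W.  For (1), with M -> A -> W -> M[1] exhibiting A in C^-, the cone
   Y of M -> A -> B is an extension of W and U0, hence lies in U; writing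
   Y -> T2 -> S2 -> Y[1] with T2 in T and S2 in S (the pair (S,T) applied to
   Y[1]) gives T2 in U (as S is inside U by Ext^1(S,V) = 0), so T2 is in W,
   and the cone of B -> Y -> T2 is an extension of M[1] and S2, hence in S. *)

Set Implicit Arguments.
Unset Strict Implicit.
Unset Printing Implicit Defensive.
Import GRing.Theory.
Local Open Scope ring_scope.

Section Triangulated.
Variable C : PreTri.
Hypothesis HC : triangulated C.
Local Notation Ob := (Obj C).
Local Notation "g ⊚ f" := (Defs.comp g f) (at level 40, left associativity).
Implicit Types X Y Z W : Ob.

Lemma compA X Y Z W (f : Mor C X Y) (g : Mor C Y Z) (h : Mor C Z W) :
  h ⊚ (g ⊚ f) = (h ⊚ g) ⊚ f.
Proof. by case: HC => -[H _ _ _ _] _; apply: H. Qed.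

Lemma comp1l X Y (f : Mor C X Y) : idm Y ⊚ f = f.
Proof. by case: HC => -[_ H _ _ _] _; apply: H. Qed.

Lemma comp1r X Y (f : Mor C X Y) : f ⊚ idm X = f.
Proof. by case: HC => -[_ _ H _ _] _; apply: H. Qed.

Lemma compDl X Y Z (f : Mor C X Y) (g g' : Mor C Y Z) :
  (g + g') ⊚ f = g ⊚ f + g' ⊚ f.
Proof. by case: HC => -[_ _ _ H _] _; apply: H. Qed.

Lemma compDr X Y Z (f f' : Mor C X Y) (g : Mor C Y Z) :
  g ⊚ (f + f') = g ⊚ f + g ⊚ f'.
Proof. by case: HC => -[_ _ _ _ H] _; apply: H. Qed.

Lemma comp0l X Y Z (f : Mor C X Y) : (0 : Mor C Y Z) ⊚ f = 0.
Proof. by apply: (addrI ((0 : Mor C Y Z) ⊚ f)); rewrite -compDl !addr0. Qed.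

Lemma comp0r X Y Z (g : Mor C Y Z) : g ⊚ (0 : Mor C X Y) = 0.
Proof. by apply: (addrI (g ⊚ (0 : Mor C X Y))); rewrite -compDr !addr0. Qed.

Lemma compNl X Y Z (f : Mor C X Y) (g : Mor C Y Z) : (- g) ⊚ f = - (g ⊚ f).
Proof. by apply: (addrI (g ⊚ f)); rewrite -compDl !subrr comp0l. Qed.

Lemma compNr X Y Z (f : Mor C X Y) (g : Mor C Y Z) : g ⊚ (- f) = - (g ⊚ f).
Proof. by apply: (addrI (g ⊚ f)); rewrite -compDr !subrr comp0r. Qed.

Lemma compBr X Y Z (f f' : Mor C X Y) (g : Mor C Y Z) :
  g ⊚ (f - f') = g ⊚ f - g ⊚ f'.
Proof. by rewrite compDr compNr. Qed.

Lemma zero_object_exists : exists Z, is_zero Z.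
Proof. by case: HC => _ [[]]. Qed.

Lemma shm1 X : shm (idm X) = idm (sh X).
Proof. by case: HC => _ [_ [[H _] _]]; apply: H. Qed.

Lemma shmM X Y Z (f : Mor C X Y) (g : Mor C Y Z) : shm (g ⊚ f) = shm g ⊚ shm f.
Proof. by case: HC => _ [_ [[_ [H _]] _]]; apply: H. Qed.

Lemma shmD X Y (f f' : Mor C X Y) : shm (f + f') = shm f + shm f'.
Proof. by case: HC => _ [_ [[_ [_ [H _]]] _]]; apply: H. Qed.

Lemma shm_full X Y (g : Mor C (sh X) (sh Y)) : exists f, shm f = g.
Proof. by case: HC => _ [_ [[_ [_ [_ [_ [H _]]]]] _]]; apply: H. Qed.

Lemma sh_shinv_iso X : isomorphic (sh (shinv X)) X.
Proof. by case: HC => _ [_ [[_ [_ [_ [_ [_ H]]]]] _]]; apply: H. Qed.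

Lemma shmN X Y (f : Mor C X Y) : shm (- f) = - shm f.
Proof.
apply: (addrI (shm f)); rewrite -shmD !subrr.
by apply: (addrI (shm (0 : Mor C X Y))); rewrite -shmD !addr0.
Qed.

Lemma is_iso_id X : is_iso (idm X).
Proof. by exists (idm X); rewrite comp1l. Qed.

Lemma iso_refl X : isomorphic X X.
Proof. by exists (idm X); apply: is_iso_id. Qed.

Lemma iso_sym X Y : isomorphic X Y -> isomorphic Y X.
Proof. by move=> [f [g [gf fg]]]; exists g, f. Qed.

Lemma iso_trans X Y Z : isomorphic X Y -> isomorphic Y Z -> isomorphic X Z.
Proof.
move=> [f [f' [f'f ff']]] [g [g' [g'g gg']]]; exists (g ⊚ f), (f' ⊚ g'); split.
  by rewrite -compA [g' ⊚ _]compA g'g comp1l.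
by rewrite -compA [f ⊚ _]compA ff' comp1l.
Qed.

Lemma iso_sh X Y : isomorphic X Y -> isomorphic (sh X) (sh Y).
Proof. by move=> [f [g [gf fg]]]; exists (shm f), (shm g); rewrite -!shmM gf fg !shm1. Qed.

Lemma dist_iso X Y Z X' Y' Z' (u : Mor C X Y) (v : Mor C Y Z) (w : Mor C Z (sh X))
  (u' : Mor C X' Y') (v' : Mor C Y' Z') (w' : Mor C Z' (sh X'))
  (a : Mor C X X') (b : Mor C Y Y') (c : Mor C Z Z') :
  is_iso a -> is_iso b -> is_iso c ->
  b ⊚ u = u' ⊚ a -> c ⊚ v = v' ⊚ b -> shm a ⊚ w = w' ⊚ c ->
  dist u v w -> dist u' v' w'.
Proof. by case: HC => _ [_ [_ [[H _ _] _]]]; apply: H. Qed.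

Lemma dist_id_zero X Z : is_zero Z -> dist (idm X) (0 : Mor C X Z) (0 : Mor C Z (sh X)).
Proof. by case: HC => _ [_ [_ [[_ H _] _]]]; apply: H. Qed.

Lemma dist_cone X Y (u : Mor C X Y) :
  exists Z (v : Mor C Y Z) (w : Mor C Z (sh X)), dist u v w.
Proof. by case: HC => _ [_ [_ [[_ _ H] _]]]; apply: H. Qed.

Lemma dist_rotE X Y Z (u : Mor C X Y) (v : Mor C Y Z) (w : Mor C Z (sh X)) :
  dist u v w <-> dist v w (- shm u).
Proof. by case: HC => _ [_ [_ [_ [H _]]]]; apply: H. Qed.

Lemma dist_rot X Y Z (u : Mor C X Y) (v : Mor C Y Z) (w : Mor C Z (sh X)) :
  dist u v w -> dist v w (- shm u).
Proof. exact: (proj1 (dist_rotE u v w)). Qed.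

Lemma dist_morph X Y Z X' Y' Z' (u : Mor C X Y) (v : Mor C Y Z) (w : Mor C Z (sh X))
  (u' : Mor C X' Y') (v' : Mor C Y' Z') (w' : Mor C Z' (sh X'))
  (a : Mor C X X') (b : Mor C Y Y') :
  dist u v w -> dist u' v' w' -> b ⊚ u = u' ⊚ a ->
  exists c : Mor C Z Z', c ⊚ v = v' ⊚ b /\ shm a ⊚ w = w' ⊚ c.
Proof. by case: HC => _ [_ [_ [_ [_ [H _]]]]]; apply: H. Qed.

Lemma octahedral X Y Z Z' X' Y' (u : Mor C X Y) (v : Mor C Y Z)
  (j : Mor C Y Z') (k : Mor C Z' (sh X)) (l : Mor C Z X') (i : Mor C X' (sh Y))
  (m : Mor C Z Y') (n : Mor C Y' (sh X)) :
  dist u j k -> dist v l i -> dist (v ⊚ u) m n ->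
  exists (f : Mor C Z' Y') (g : Mor C Y' X') (h : Mor C X' (sh Z')), dist f g h.
Proof.
case: HC => _ [_ [_ [_ [_ [_ H]]]]] Duj Dvl Dvum.
by have [f [g [D _ _ _ _]]] := H _ _ _ _ _ _ _ _ _ _ _ _ _ _ Duj Dvl Dvum; exists f, g, (shm j ⊚ i).
Qed.

(* Since [1] is full, a triangle whose last map lands in a shift can always be
   rotated backwards. *)
Lemma dist_unrot X Y Z (v : Mor C Y Z) (w : Mor C Z (sh X)) (w' : Mor C (sh X) (sh Y)) :
  dist v w w' -> exists u : Mor C X Y, dist u v w.
Proof.
move=> D; have [u Eu] := shm_full w'; exists (- u).
by apply/dist_rotE; rewrite shmN opprK Eu.
Qed.

Lemma dist_rot_shinv X Y Z (u : Mor C X Y) (v : Mor C Y Z) (w : Mor C Z (sh X)) :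
  dist u v w ->
  exists (x : Mor C (shinv Z) X) (w' : Mor C Y (sh (shinv Z))), dist x u w'.
Proof.
move=> D; have [phi [psi [psiphi phipsi]]] := sh_shinv_iso Z.
have D' : dist u (psi ⊚ v) (w ⊚ phi).
  apply: (dist_iso (is_iso_id X) (is_iso_id Y) (c := psi) _ _ _ _ D).
  - by exists phi.
  - by rewrite comp1l comp1r.
  - by rewrite comp1r.
  - by rewrite shm1 comp1l -compA phipsi comp1r.
by have [x Dx] := dist_unrot D'; exists x, (psi ⊚ v).
Qed.

Lemma dist_comp0 X Y Z (u : Mor C X Y) (v : Mor C Y Z) (w : Mor C Z (sh X)) :
  dist u v w -> v ⊚ u = 0.
Proof.
move=> D; have [Z0 HZ0] := zero_object_exists.
have [c [Ec _]] := dist_morph (dist_id_zero X HZ0) D (erefl (u ⊚ idm X)).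
by rewrite -Ec comp0r.
Qed.

Lemma dist_exact_left X Y Z (u : Mor C X Y) (v : Mor C Y Z) (w : Mor C Z (sh X))
  T (g : Mor C T Y) :
  dist u v w -> v ⊚ g = 0 -> exists h, g = u ⊚ h.
Proof.
move=> D vg; have [Z0 HZ0] := zero_object_exists.
have E : (0 : Mor C Z0 Z) ⊚ (0 : Mor C T Z0) = v ⊚ g by rewrite comp0l vg.
have [c [_ Ec]] := dist_morph (dist_rot (dist_id_zero T HZ0)) (dist_rot D) E.
have [h Eh] := shm_full c; subst c; exists h.
case: HC => _ [_ [[_ [_ [_ [inj _]]]] _]]; apply: inj.
by move: Ec; rewrite shm1 compNr comp1r compNl -shmM => /oppr_inj.
Qed.

Lemma dist_exact_right X Y Z (u : Mor C X Y) (v : Mor C Y Z) (w : Mor C Z (sh X))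
  T (g : Mor C Y T) :
  dist u v w -> g ⊚ u = 0 -> exists h : Mor C Z T, h ⊚ v = g.
Proof.
move=> D gu; have [Z0 HZ0] := zero_object_exists.
have [x [w' D0]] := dist_rot_shinv (dist_id_zero T HZ0).
have E : g ⊚ u = x ⊚ (0 : Mor C X (shinv Z0)) by rewrite comp0r gu.
by have [c [Ec _]] := dist_morph D D0 E; exists c; rewrite Ec comp1l.
Qed.

Lemma split_mono_biproduct M X (a : Mor C M X) (s : Mor C X M) :
  a ⊚ s = idm X -> exists Y, is_biproduct X Y M.
Proof.
move=> as1; have [Y [p2 [w D]]] := dist_cone s.
have p2s : p2 ⊚ s = 0 := dist_comp0 D.
have w0 : w = 0.
  have sw : shm s ⊚ w = 0.
    by apply: oppr_inj; rewrite -compNl (dist_comp0 (dist_rot (dist_rot D))) oppr0.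
  by rewrite -[w]comp1l -shm1 -as1 shmM -compA sw comp0r.
have [i0 Ei0] : exists i0, idm Y = p2 ⊚ i0.
  by apply: (dist_exact_left (dist_rot D)); rewrite w0 comp0l.
(* i0 corrected to be killed by a, so that (s, i2) is the inclusion pair *)
pose i2 := i0 - s ⊚ (a ⊚ i0).
have ai2 : a ⊚ i2 = 0 by rewrite compBr compA as1 comp1l subrr.
have p2i2 : p2 ⊚ i2 = idm Y by rewrite compBr compA p2s comp0l subr0 -Ei0.
exists Y, s, i2, a, p2; split => //.
pose e := idm M - s ⊚ a - i2 ⊚ p2.
have p2e : p2 ⊚ e = 0.
  by rewrite !compBr comp1r compA p2s comp0l subr0 compA p2i2 comp1l subrr.
have [g Eg] := dist_exact_left D p2e.
have ae : a ⊚ e = 0.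
  by rewrite !compBr comp1r compA as1 comp1l compA ai2 comp0l subrr subr0.
have e0 : e = 0 by rewrite Eg -[g]comp1l -as1 -compA -Eg ae comp0r.
by apply/eqP; move/eqP: e0; rewrite /e -addrA -opprD subr_eq0 eq_sym.
Qed.

Lemma star_shift1_rot (M N : Ob -> Prop) X :
  star M (shift1 N) (sh X) ->
  exists Mo No (a : Mor C X No) (b : Mor C No Mo) (c : Mor C Mo (sh X)),
    [/\ M Mo, N No & dist a b c].
Proof.
move=> [Mo [Nv [al [be [ga [HMo [No [HNo [psi [psi' [psi'psi psipsi']]]]]] D]]]]].
have D' : dist al (psi ⊚ be) (ga ⊚ psi').
  apply: (dist_iso (is_iso_id Mo) (is_iso_id (sh X)) (c := psi) _ _ _ _ D).
  - by exists psi'.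
  - by rewrite comp1l comp1r.
  - by rewrite comp1r.
  - by rewrite shm1 comp1l -compA psi'psi comp1r.
have [b Db] := dist_unrot D'; have [a Da] := dist_unrot Db.
by exists Mo, No, a, b, al.
Qed.

Lemma cone_comp_closed (P : Ob -> Prop) (Pext : forall X, star P P X -> P X)
  X Y Z Z' X' Y' (u : Mor C X Y) (v : Mor C Y Z)
  (j : Mor C Y Z') (k : Mor C Z' (sh X)) (l : Mor C Z X') (i : Mor C X' (sh Y))
  (m : Mor C Z Y') (n : Mor C Y' (sh X)) :
  dist u j k -> dist v l i -> dist (v ⊚ u) m n -> P Z' -> P X' -> P Y'.
Proof.
move=> Duj Dvl Dvum PZ' PX'; have [f [g [h D]]] := octahedral Duj Dvl Dvum.
by apply: Pext; exists Z', X', f, g, h.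
Qed.

Lemma star_shiftm1_dist (M N : Ob -> Prop) X Y Z
  (u : Mor C X Y) (v : Mor C Y Z) (w : Mor C Z (sh X)) :
  M Z -> N Y -> dist u v w -> star (shiftm1 M) N X.
Proof.
move=> MZ NY D; have [x [w' Dx]] := dist_rot_shinv D.
by exists (shinv Z), Y, x, u, w'; split=> //; exists Z; split=> //; apply: iso_refl.
Qed.

Section CotorsionPair.
Variables P Q : Ob -> Prop.
Hypothesis HPQ : cotorsion_pair P Q.

Lemma cotorsion_left_iso X Y : P X -> isomorphic X Y -> P Y.
Proof. by case: HPQ => -[H _ _ _] _ _ _; apply: H. Qed.

Lemma cotorsion_leftP X : (forall Y, Q Y -> forall f : Mor C X (sh Y), f = 0) -> P X.
Proof.
move=> Ext0; case: HPQ => -[_ _ _ summand] _ _ decomp.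
have [Mo [N1 [a [b [c [PMo [No [QNo [psi [psi' [psi'psi _]]]]] D]]]]]] := decomp X.
have b0 : b ⊚ idm X = 0.
  by rewrite comp1r -[b]comp1l -psi'psi -compA (Ext0 _ QNo (psi ⊚ b)) comp0r.
have [s Es] := dist_exact_left D b0.
have [Y HY] := split_mono_biproduct (esym Es).
exact: summand HY PMo.
Qed.

Lemma cotorsion_left_ext X : star P P X -> P X.
Proof.
move=> [X1 [X2 [a [b [c [P1 P2 D]]]]]]; apply: cotorsion_leftP => Y QY f.
case: HPQ => _ _ Ext0 _.
have [g <-] := dist_exact_right D (Ext0 _ _ P1 QY (f ⊚ a)).
by rewrite (Ext0 _ _ P2 QY g) comp0l.
Qed.

Lemma cotorsion_left_sh_shinv X : P X -> P (sh (shinv X)).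
Proof. by move=> PX; apply: (cotorsion_left_iso PX); apply/iso_sym/sh_shinv_iso. Qed.

Lemma cotorsion_left_sh_shiftm1 X : shiftm1 P X -> P (sh X).
Proof.
move=> [Y [PY isoX]]; apply: (cotorsion_left_iso PY); apply: iso_sym.
exact: iso_trans (iso_sh isoX) (sh_shinv_iso Y).
Qed.

End CotorsionPair.

Section TwinCotorsionPair.
Variables S T U V : Ob -> Prop.
Hypothesis Htw : twin_cotorsion_pair S T U V.

Let cpST : cotorsion_pair S T. Proof. by case: Htw. Qed.
Let cpUV : cotorsion_pair U V. Proof. by case: Htw. Qed.

Lemma twin_left_sub X : S X -> U X.
Proof.
move=> SX; apply: (cotorsion_leftP cpUV) => Y VY f.
by case: Htw => _ _ Ext0; apply: Ext0 SX VY f.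
Qed.

Lemma Cminus_cone_closed A B U0 (u : Mor C (shinv U0) A) (f : Mor C A B)
  (w : Mor C B (sh (shinv U0))) :
  U U0 -> dist u f w -> Cminus S T U A -> Cminus S T U B.
Proof.
move=> UU0 D [M [W [m [b [c [HM [TW UW] DA]]]]]].
have [Y [p [q DY]]] := dist_cone (f ⊚ m).
have UY : U Y := cone_comp_closed (cotorsion_left_ext cpUV) DA (dist_rot D) DY
  UW (cotorsion_left_sh_shinv cpUV UU0).
have [S2 [T2 [x [g [al [SS2 TT2 DT]]]]]] :=
  star_shift1_rot (match cpST with And4 _ _ _ decomp => decomp (sh Y) end).
have UT2 : U T2.
  by apply: (cotorsion_left_ext cpUV); exists Y, S2, x, g, al; split=> //; apply: twin_left_sub.
have [Z [p' [q' DZ]]] := dist_cone (x ⊚ p).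
have SZ : S Z := cone_comp_closed (cotorsion_left_ext cpST) (dist_rot DY) DT DZ
  (cotorsion_left_sh_shiftm1 cpST HM) SS2.
exact: star_shiftm1_dist SZ (conj TT2 UT2) DZ.
Qed.

Lemma Cminus_fibre_closed A B S0 (u : Mor C (shinv S0) A) (f : Mor C A B)
  (w : Mor C B (sh (shinv S0))) :
  S S0 -> dist u f w -> Cminus S T U B -> Cminus S T U A.
Proof.
move=> SS0 D [M [W [m [b [c [HM HW DB]]]]]].
have [Z [p [q DZ]]] := dist_cone (b ⊚ f).
have SZ : S Z := cone_comp_closed (cotorsion_left_ext cpST) (dist_rot D) (dist_rot DB) DZ
  (cotorsion_left_sh_shinv cpST SS0) (cotorsion_left_sh_shiftm1 cpST HM).
exact: star_shiftm1_dist SZ HW DZ.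
Qed.

End TwinCotorsionPair.

End Triangulated.

Theorem lemma2p12 (C : PreTri) (HC : triangulated C)
  (S T U V : Obj C -> Prop) (Htw : twin_cotorsion_pair S T U V) :
  (forall (A B U0 : Obj C) (f : Mor C A B),
      U U0 ->
      (exists (u : Mor C (shinv U0) A) (w : Mor C B (sh (shinv U0))), dist u f w) ->
      Cminus S T U A -> Cminus S T U B)
  /\
  (forall (A B S0 : Obj C) (f : Mor C A B),
      S S0 ->
      (exists (u : Mor C (shinv S0) A) (w : Mor C B (sh (shinv S0))), dist u f w) ->
      Cminus S T U B -> Cminus S T U A).
Proof.
split=> A B X0 f HX0 [u [w D]].
  exact: (Cminus_cone_closed HC Htw HX0 D).
exact: (Cminus_fibre_closed HC Htw HX0 D).
Qed.
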